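(* Let $\mathbb{A}$ be an epistemic Heyting algebra, let $\mathbb{E}=(E,(\sim_i),(P_i),\Phi,\mathsf{pre})$ be a probabilistic event structure over $\mathbb{A}$, and let $\mathbb{A}'=\prod_{\mathbb{E}}\mathbb{A}$ be the intermediate algebra. For every agent $i\in\mathsf{Ag}$, $$\mathsf{Min}_i(\mathbb{A}')=\{f_{e,a}\mid e\in E\text{ and }a\in\mathsf{Min}_i(\mathbb{A})\},$$ where for $e\in E$ and $a\in\mathsf{Min}_i(\mathbb{A})$, $f_{e,a}:E\to\mathbb{A}$ is given by $f_{e,a}(e')=a$ if $e'\sim_i e$ and $f_{e,a}(e')=\bot$ otherwise.
   Context: Fix a set $\mathsf{Ag}$ of agents. A monadic Heyting algebra is a Heyting algebra $\mathbb{L}$ with, for each $i\in\mathsf{Ag}$, monotone unary operations $\lozenge_i,\Box_i$ such that for all $a,b$: $a\leq\lozenge_i a$; $\Box_i a\leq a$; $\lozenge_i(a\vee b)\leq\lozenge_i a\vee\lozenge_i b$; $\Box_i(a\to b)\leq\Box_i a\to\Box_i b$; $\lozenge_i a\leq\Box_i\lozenge_i a$; $\lozenge_i\Box_i a\leq\Box_i a$; $\Box_i(a\to b)\leq\lozenge_i a\to\lozenge_i b$; $\lozenge_i\bot\leq\bot$; $\top\leq\Box_i\top$. An epistemic Heyting algebra is a finite monadic Heyting algebra with $\lozenge_i a\vee\neg\lozenge_i a=\top$ for all $i,a$. An element $a$ is $i$-minimal if $a\neq\bot$, $\lozenge_i a=a$, and whenever $b<a$ and $\lozenge_i b=b$ then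 $b=\bot$; $\mathsf{Min}_i(\mathbb{A})$ is the set of $i$-minimal elements. A pre-ordered multiset on a set $X$ is a multiset of elements of $X$ in which the copies $x_1,\dots,x_n$ of any element carry the linear order $x_1\prec\cdots\prec x_n$. A probabilistic event structure over $\mathbb{A}$ is a tuple $(E,(\sim_i),(P_i),\Phi,\mathsf{pre})$ where: $E$ is a non-empty finite set; each $\sim_i$ is an equivalence relation on $E$; each $P_i:E\to\,]0,1]$ satisfies $\sum\{P_i(e')\mid e'\sim_i e\}=1$; $\Phi$ is a finite pre-ordered multiset on $\mathbb{A}$ such that any $a,b\in\Phi$ arising from distinct elements satisfy $a\wedge b=\bot$ or $a<b$ or $b<a$; $\mathsf{pre}(\bullet\mid a)$ is a probability distribution on $E$ for each $a\in\Phi$; and if $\mathsf{pre}(e\mid a)=0$ then $\mathsf{pre}(e\mid b)=0$ for all $b\in\Phi$ with $a<b$ (distinct elements) or $a\prec b$ (copies of the same element). The intermediate algebra $\mathbb{A}'=\prod_{\mathbb{E}}\mathbb{A}$ has as carrier all maps $f:E\to\mathbb{A}$ with pointwise Heyting operations, and $(\lozenge'_i f)(e)=\bigvee\{\lozenge_i f(e')\mid e'\sim_i e\}$, $(\Box'_i f)(e)=\bigwedge\{\Box_i f(e')\mid e'\sim_i e\}$; $i$-minimality in $\mathbb{A}'$ is with respect to $\lozenge'_i$. *)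

From HB Require Import structures.
From mathcomp Require Import all_boot all_order all_algebra.
From mathcomp Require Import reals.
Set Implicit Arguments.
Unset Strict Implicit.
Unset Printing Implicit Defensive.
Import Order.TTheory GRing.Theory Num.Theory.
Local Open Scope order_scope.

Section Defs.
Context {disp : Order.disp_t} (A : finTBLatticeType disp).
Context (Ag : Type).

Definition heyting_imp (imp : A -> A -> A) : Prop :=
  forall a b c : A, (c `&` a <= b) = (c <= imp a b).

Definition hneg (imp : A -> A -> A) (a : A) : A := imp a \bot.

Definition monadic_heyting (imp : A -> A -> A) (dia box : Ag -> A -> A) : Prop :=
  heyting_imp imp /\
  forall i : Ag,
  [/\ {homo dia i : a b / a <= b}, {homo box i : a b / a <= b},
      (forall a, a <= dia i a), (forall a, box i a <= a) &
      (forall a b, dia i (a `|` b) <= dia i a `|` dia i b)] /\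
  [/\ (forall a b, box i (imp a b) <= imp (box i a) (box i b)),
      (forall a, dia i a <= box i (dia i a)),
      (forall a, dia i (box i a) <= box i a) &
      (forall a b, box i (imp a b) <= imp (dia i a) (dia i b))] /\
  (dia i \bot <= \bot /\ \top <= box i \top).

Definition epistemic_heyting (imp : A -> A -> A) (dia box : Ag -> A -> A) : Prop :=
  monadic_heyting imp dia box /\
  forall i a, dia i a `|` hneg imp (dia i a) = \top.

Definition i_minimal (dia : Ag -> A -> A) (i : Ag) (a : A) : Prop :=
  [/\ a <> \bot, dia i a = a &
      forall b : A, b < a -> dia i b = b -> b = \bot].

(* The finite pre-ordered multiset Phi
   is a list; copies of the same element are ordered by position in the list
   (x_j "precedes" x_k iff j < k). *)
Definition prob_event_structure (R : realType) (E : finType)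
    (sim : Ag -> rel E) (P : Ag -> E -> R) (Phi : seq A)
    (pre : 'I_(size Phi) -> E -> R) : Prop :=
  [/\ (0 < #|E|)%N,
      (forall i, equivalence_rel (sim i)),
      (forall i e, (0 < P i e)%R /\ (P i e <= 1)%R) &
      (forall i e, (\sum_(e' | sim i e' e) P i e')%R = 1%R)] /\
  [/\
      (forall j k : 'I_(size Phi),
         nth \bot Phi j != nth \bot Phi k ->
         [\/ nth \bot Phi j `&` nth \bot Phi k = \bot,
             nth \bot Phi j < nth \bot Phi k |
             nth \bot Phi k < nth \bot Phi j]),
      (forall j e, (0 <= pre j e)%R),
      (forall j, (\sum_e pre j e)%R = 1%R) &
      (forall (j k : 'I_(size Phi)) (e : E), pre j e = 0%R ->
         (nth \bot Phi j != nth \bot Phi k /\ nth \bot Phi j < nth \bot Phi k)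
         \/ (nth \bot Phi j == nth \bot Phi k /\ (j < k)%N) ->
         pre k e = 0%R)].

(* The intermediate algebra prod_E A: carrier {ffun E -> A}, pointwise order
   and bottom, and the lifted diamond/box. *)
Definition dia' (E : finType) (sim : Ag -> rel E) (dia : Ag -> A -> A)
    (i : Ag) (f : {ffun E -> A}) : {ffun E -> A} :=
  [ffun e => \join_(e' | sim i e' e) dia i (f e')].

Definition box' (E : finType) (sim : Ag -> rel E) (box : Ag -> A -> A)
    (i : Ag) (f : {ffun E -> A}) : {ffun E -> A} :=
  [ffun e => \meet_(e' | sim i e' e) box i (f e')].

Definition fbot (E : finType) : {ffun E -> A} := [ffun => \bot].

Definition fle (E : finType) (f g : {ffun E -> A}) : Prop := forall e, f e <= g e.
Definition flt (E : finType) (f g : {ffun E -> A}) : Prop := fle f g /\ f <> g.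

Definition i_minimal' (E : finType) (sim : Ag -> rel E) (dia : Ag -> A -> A)
    (i : Ag) (f : {ffun E -> A}) : Prop :=
  [/\ f <> fbot E, dia' sim dia i f = f &
      forall g, flt g f -> dia' sim dia i g = g -> g = fbot E].

Definition f_ea (E : finType) (sim : Ag -> rel E) (i : Ag) (e : E) (a : A)
    : {ffun E -> A} :=
  [ffun e' => if sim i e' e then a else \bot].

End Defs.

(* A fixed point g of the lifted diamond is constant on every ~_i-class, since g e and g e'
   are both the join of dia_i g over that class, and its values are dia_i-fixed.  So for a
   dia_i-fixed b <= g e the map f_{e,b} is a fixed point below g.  If g is i-minimal and
   g e <> bot, minimality forces g = f_{e, g e}, and a dia_i-fixed b < g e would give a
   fixed point f_{e,b} strictly below g, whence b = bot.  Conversely, a fixed point below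
   f_{e,a} is f_{e,b} for b its value at e. *)
From HB Require Import structures.
From mathcomp Require Import all_boot all_order all_algebra.
From mathcomp Require Import reals.
Set Implicit Arguments.
Unset Strict Implicit.
Unset Printing Implicit Defensive.
Import Order.TTheory.
Local Open Scope order_scope.

Lemma joins_const {disp : Order.disp_t} (L : bLatticeType disp) (I : finType)
    (P : {pred I}) (F : I -> L) (j : I) (x : L) :
  P j -> (forall k, P k -> F k = x) -> \join_(k | P k) F k = x.
Proof.
move=> Pj Fx; apply/le_anti/andP; split; first by apply/joinsP => k /Fx ->.
by apply: (joins_min (j := j)) => //; rewrite Fx.
Qed.

Section LiftedDiamond.
Variables (disp : Order.disp_t) (A : finTBLatticeType disp) (Ag : Type) (E : finType).
Variables (sim : Ag -> rel E) (dia : Ag -> A -> A) (i : Ag).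
Hypothesis sim_equiv : equivalence_rel (sim i).
Hypothesis dia_bot : dia i \bot = \bot.

Local Notation "x ~ y" := (sim i x y) (at level 70).
Local Notation dia'i := (dia' sim dia i).
Local Notation f_ea := (@f_ea _ A _ E sim i).

Lemma sim_refl : reflexive (sim i).
Proof. by case/equivalence_relP: sim_equiv. Qed.

Lemma sim_sym : symmetric (sim i).
Proof.
case/equivalence_relP: sim_equiv => refl ltrans x y.
by apply/idP/idP => h; rewrite -(ltrans _ _ h) refl.
Qed.

Lemma sim_ltrans (x y z : E) : x ~ y -> (x ~ z) = (y ~ z).
Proof. by case/equivalence_relP: sim_equiv => _ ltrans /ltrans. Qed.

Lemma sim_rtrans (x y z : E) : x ~ y -> (z ~ x) = (z ~ y).
Proof. by move=> h; rewrite sim_sym (sim_ltrans _ h) sim_sym. Qed.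

Lemma dia'_fixed_class_const (g : {ffun E -> A}) (e e' : E) :
  dia'i g = g -> e' ~ e -> g e' = g e.
Proof.
move=> gfix h; rewrite -gfix !ffunE.
by apply: eq_bigl => y; rewrite (sim_rtrans _ h).
Qed.

Lemma dia'_class_constE (g : {ffun E -> A}) (e : E) :
  (forall e', e' ~ e -> g e' = g e) -> dia'i g e = dia i (g e).
Proof. by move=> gc; rewrite ffunE; apply: (joins_const (sim_refl e)) => e' /gc ->. Qed.

Lemma dia'_fixed_dia (g : {ffun E -> A}) (e : E) :
  dia'i g = g -> dia i (g e) = g e.
Proof.
move=> gfix; rewrite -dia'_class_constE ?gfix // => e'.
exact: dia'_fixed_class_const.
Qed.

Lemma f_ea_self (e : E) (a : A) : f_ea e a e = a.
Proof. by rewrite ffunE sim_refl. Qed.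

Lemma f_ea_inj (e : E) : injective (f_ea e).
Proof. by move=> a b /(congr1 (fun g : {ffun E -> A} => g e)); rewrite !f_ea_self. Qed.

Lemma f_ea_bot (e : E) : f_ea e \bot = fbot A E.
Proof. by apply/ffunP => e'; rewrite !ffunE if_same. Qed.

Lemma f_ea_class_const (e y y' : E) (a : A) : y' ~ y -> f_ea e a y' = f_ea e a y.
Proof. by move=> h; rewrite !ffunE (sim_ltrans _ h). Qed.

Lemma dia'_f_ea (e : E) (a : A) : dia i a = a -> dia'i (f_ea e a) = f_ea e a.
Proof.
move=> da; apply/ffunP => y; rewrite dia'_class_constE => [|y']; last exact: f_ea_class_const.
by rewrite ffunE; case: ifP => _; rewrite ?da ?dia_bot.
Qed.

Lemma f_ea_le_fixed (g : {ffun E -> A}) (e : E) (b : A) :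
  dia'i g = g -> b <= g e -> fle (f_ea e b) g.
Proof.
move=> gfix bg y; rewrite ffunE; case: ifP => [ye | _]; last exact: le0x.
by rewrite (dia'_fixed_class_const gfix ye).
Qed.

Lemma dia'_fixed_le_f_eaE (g : {ffun E -> A}) (e : E) (a : A) :
  dia'i g = g -> fle g (f_ea e a) -> g = f_ea e (g e).
Proof.
move=> gfix gle; apply/ffunP => y; rewrite ffunE; case: ifP => [ye | nye].
  exact: dia'_fixed_class_const.
by apply/eqP; rewrite -lex0; move: (gle y); rewrite ffunE nye.
Qed.

Lemma i_minimal'_f_ea (e : E) (a : A) :
  i_minimal dia i a -> i_minimal' sim dia i (f_ea e a).
Proof.
case=> a_neq0 da a_min; split; last move=> g [gle g_neq] gfix.
- by rewrite -(f_ea_bot e) => /f_ea_inj.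
- exact: dia'_f_ea.
have ge_le_a : g e <= a by have := gle e; rewrite f_ea_self.
have ge_neq_a : g e != a by apply: contra_notN g_neq => /eqP <-; apply: dia'_fixed_le_f_eaE.
have ge0 : g e = \bot.
  by apply: a_min; [rewrite lt_neqAle ge_neq_a | exact: dia'_fixed_dia].
by rewrite (dia'_fixed_le_f_eaE gfix gle) ge0 f_ea_bot.
Qed.

Lemma i_minimal'_f_eaP (f : {ffun E -> A}) :
  i_minimal' sim dia i f ->
  exists e a, i_minimal dia i a /\ f = f_ea e a.
Proof.
case=> f_neq0 ffix f_min.
have [e fe_neq0] : exists e, f e != \bot.
  apply/existsP; apply: contra_notT f_neq0; rewrite negb_exists => /forallP f0.
  by apply/ffunP => y; rewrite ffunE; apply/eqP/negPn.
have f_ea_below_f b : b <= f e -> dia i b = b ->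
    f_ea e b = f \/ f_ea e b = fbot A E.
  move=> bf db; have [-> | neq] := eqVneq (f_ea e b) f; first by left.
  by right; apply: f_min; [split; [exact: f_ea_le_fixed | exact/eqP] | exact: dia'_f_ea].
have dfe := dia'_fixed_dia e ffix.
have f_eq : f = f_ea e (f e).
  case: (f_ea_below_f _ (lexx _) dfe) => [-> // | ].
  by rewrite -(f_ea_bot e) => /f_ea_inj /eqP; rewrite (negbTE fe_neq0).
exists e, (f e); split => //; split => [|//|b bf db]; first exact/eqP.
case: (f_ea_below_f _ (ltW bf) db) => [fb | fb0].
  by move: bf; rewrite -fb f_ea_self ltxx.
by apply: (@f_ea_inj e); rewrite fb0 f_ea_bot.
Qed.

End LiftedDiamond.

Theorem proposition4 (disp : Order.disp_t) (A : finTBLatticeType disp)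
    (Ag : Type) (imp : A -> A -> A) (dia box : Ag -> A -> A)
    (R : realType) (E : finType) (sim : Ag -> rel E) (P : Ag -> E -> R)
    (Phi : seq A) (pre : 'I_(size Phi) -> E -> R) :
  epistemic_heyting imp dia box ->
  prob_event_structure sim P pre ->
  forall (i : Ag) (f : {ffun E -> A}),
    i_minimal' sim dia i f <->
    exists (e : E) (a : A), i_minimal dia i a /\ f = f_ea sim i e a.
Proof.
move=> [[_ mon] _] [[_ sim_equiv _ _] _] i f.
have dia_bot : dia i \bot = \bot.
  by have [_ [_ [dia_le0 _]]] := mon i; apply/eqP; rewrite -lex0.
split; first exact: i_minimal'_f_eaP.
by case=> e [a [a_min ->]]; apply: i_minimal'_f_ea.
Qed.
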